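(* Let $G$ be a finite group and $S$ the Monster group $M$ or the Baby Monster group $B$. If $|G| = |S|$, then $G$ is neither a Frobenius group nor a 2-Frobenius group.
   Context: A finite group $G$ is a 2-Frobenius group if it has a normal series $1 \trianglelefteq A \trianglelefteq B' \trianglelefteq G$ such that $B'$ is a Frobenius group with Frobenius kernel $A$ and $G/A$ is a Frobenius group with Frobenius kernel $B'/A$. Orders: $|M|=2^{46}\cdot3^{20}\cdot5^9\cdot7^6\cdot11^2\cdot13^3\cdot17\cdot19\cdot23\cdot29\cdot31\cdot41\cdot47\cdot59\cdot71$, $|B|=2^{41}\cdot3^{13}\cdot5^6\cdot7^2\cdot11\cdot13\cdot17\cdot19\cdot23\cdot31\cdot47$. *)

From mathcomp Require Import all_boot all_fingroup all_solvable.
Set Implicit Arguments. Unset Strict Implicit. Unset Printing Implicit Defensive.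
Local Open Scope group_scope.

Definition Monster_order : nat :=
  (2^46 * 3^20 * 5^9 * 7^6 * 11^2 * 13^3 * 17 * 19 * 23 * 29 * 31 * 41 * 47 * 59 * 71)%N.

Definition BabyMonster_order : nat :=
  (2^41 * 3^13 * 5^6 * 7^2 * 11 * 13 * 17 * 19 * 23 * 31 * 47)%N.

Definition two_Frobenius (gT : finGroupType) (G : {group gT}) : Prop :=
  exists (A B' : {group gT}),
    [/\ A <| G, B' <| G, A \subset B',
        [Frobenius B' with kernel A] &
        [Frobenius (G / A) with kernel (B' / A)]].

(* Group theory turns both structures into arithmetic.  A Frobenius group with
   kernel K and complement H gives a coprime splitting |G| = |H| |K| with
   |H| | |K| - 1, in which every prime q of |H| divides |P| - 1 for each
   Sylow subgroup P of K (a Sylow subgroup of H acts regularly on an invariant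
   Sylow subgroup of K).  A 2-Frobenius group gives |G| = a b c with
   c | b - 1, b | a - 1 and the same kind of divisibility one level up.

   In both cases the "inner" factor x (|H|, resp. b) is a linked divisor of n:
   every prime q of x and every prime p of n outside x satisfy
   p | q^(e_q) - 1 or q | p^(e_p) - 1, where e_r is the exponent of r in n.
   For n = |M| and n = |B| the prime 17 (which divides n exactly once) is a
   hub: it is linked to no other odd prime of n.  Hence a linked divisor that
   contains an odd prime contains all odd primes, so x is the 2-part or the
   2'-part of n.  Each alternative is then refuted by two numerical facts on
   n_2 and n_2' (a size comparison and a residue computation), checked in Z. *)

From Stdlib Require Import Lia ZArith.
From mathcomp Require Import all_boot all_fingroup all_solvable.
From mathcomp Require Import zify.
From mathcomp Require vcharacter.
Set Implicit Arguments. Unset Strict Implicit. Unset Printing Implicit Defensive.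

Definition linked (n q p : nat) : bool :=
  (p %| q ^ logn q n - 1) || (q %| p ^ logn p n - 1).

Lemma linkedC n q p : linked n q p = linked n p q.
Proof. by rewrite /linked orbC. Qed.

Definition linked_divisor (n x : nat) : Prop :=
  forall q p, prime q -> q %| x -> prime p -> p %| n -> ~~ (p %| x) -> linked n q p.

Definition hub (n r : nat) : Prop :=
  [/\ prime r, r %| n &
      forall p, prime p -> p %| n -> odd p -> p != r -> ~~ linked n r p].

(* A linked divisor containing one odd prime must absorb the hub, and then
   every odd prime of n. *)
Lemma hub_spread n x r q :
  linked_divisor n x -> hub n r -> x %| n -> prime q -> odd q -> q %| x ->
  forall p, prime p -> odd p -> p %| n -> p %| x.
Proof.
move=> lx [pr_r r_n hub_r] x_n pr_q odd_q q_x.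
have r_x : r %| x.
  have [<- //|q_r] := eqVneq q r.
  apply: contraNT (hub_r q pr_q (dvdn_trans q_x x_n) odd_q q_r) => r'x.
  by rewrite linkedC; apply: lx.
move=> p pr_p odd_p p_n; have [-> //|p_r] := eqVneq p r.
by apply: contraNT (hub_r p pr_p p_n odd_p p_r); apply: lx.
Qed.

Lemma two_part_split n u v :
  u * v = n -> coprime u v -> 1 < u -> 2.-nat u -> 0 < v -> u = n`_2 /\ v = n`_2^'.
Proof.
move=> <- cuv u_gt1 u2 v_gt0; have u_gt0 := ltnW u_gt1.
have two_u : 2 %| u.
  have := pnatP _ u_gt0 u2 _ (pdiv_prime u_gt1) (pdiv_dvd u).
  by rewrite inE => /eqP <-; apply: pdiv_dvd.
have v2' : 2^'.-nat v by rewrite p'natE // -prime_coprime // (coprime_dvdl two_u).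
rewrite !partnM // part_pnat_id // part_p'nat // part_p'nat ?pnatNK //.
by rewrite part_pnat_id // muln1 mul1n.
Qed.

Lemma linked_split n x y r :
  x * y = n -> coprime x y -> 1 < x -> 1 < y -> linked_divisor n x -> hub n r ->
  (x = n`_2 /\ y = n`_2^') \/ (x = n`_2^' /\ y = n`_2).
Proof.
move=> xy cxy x_gt1 y_gt1 lx hub_r; have [x_gt0 y_gt0] := (ltnW x_gt1, ltnW y_gt1).
have [x2|] := boolP (2.-nat x); first by left; apply: two_part_split.
rewrite /pnat x_gt0 /= => /allPn[q]; rewrite mem_primes inE => /and3P[pr_q _ q_x] q_2.
have odd_q : odd q by case: (even_prime pr_q) q_2 => [->|].
have x_n : x %| n by rewrite -xy dvdn_mulr.
have odd_in_x := hub_spread lx hub_r x_n pr_q odd_q q_x.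
have y2 : 2.-nat y.
  apply/pnatP=> // p pr_p p_y; rewrite inE.
  case: (even_prime pr_p) => [-> //|odd_p].
  have p_x : p %| x by apply: odd_in_x; rewrite // -xy dvdn_mull.
  have := coprime_dvdr p_y (coprime_dvdl p_x cxy).
  by rewrite prime_coprime // dvdnn.
have [] := two_part_split (n := n) _ _ y_gt1 y2 x_gt0; last by right.
- by rewrite mulnC.
- by rewrite coprime_sym.
Qed.

Lemma cofactor_mod t m a c :
  a * c = m -> 1 < t -> c %| t - 1 -> t %| a - 1 -> 0 < a -> m %% t = c.
Proof.
move=> <- t_gt1 c_t /dvdnP[k a1] a_gt0.
have c_lt_t : c < t by have := dvdn_leq _ c_t; rewrite subn_gt0 => /(_ t_gt1); lia.
rewrite -(subnK a_gt0) a1 mulnDl mul1n mulnAC modnMDl modn_small //.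
Qed.

Definition two_part_obstruction (n : nat) : Prop :=
  n`_2 < n`_2^' /\ ~~ (n`_2^' %% n`_2 %| n`_2 - 1).

(* Numerical shadow of a Frobenius group of order n with complement order h
   and kernel order k. *)
Record frobenius_numbers (n h k : nat) : Prop := FrobeniusNumbers {
  frobenius_order : h * k = n;
  frobenius_coprime : coprime h k;
  frobenius_complement_gt1 : 1 < h;
  frobenius_kernel_gt1 : 1 < k;
  frobenius_dvd_kernel : h %| k - 1;
  frobenius_action : forall q p, prime q -> q %| h -> prime p -> q %| p ^ logn p k - 1 }.

(* Numerical shadow of a 2-Frobenius group 1 <| A <| B' <| G of order n with
   a = |A|, b = |B' / A| and c = |G / B'|. *)
Record two_frobenius_numbers (n a b c : nat) : Prop := TwoFrobeniusNumbers {
  two_frobenius_order : a * b * c = n;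
  two_frobenius_coprime_ab : coprime a b;
  two_frobenius_coprime_bc : coprime b c;
  two_frobenius_a_gt1 : 1 < a;
  two_frobenius_b_gt1 : 1 < b;
  two_frobenius_c_gt1 : 1 < c;
  two_frobenius_dvd_c : c %| b - 1;
  two_frobenius_dvd_b : b %| a - 1;
  two_frobenius_lower_action : forall q p, prime q -> q %| b -> prime p -> q %| p ^ logn p a - 1;
  two_frobenius_upper_action : forall q p, prime q -> q %| c -> prime p -> q %| p ^ logn p b - 1 }.

Section GroupNumbers.
Local Open Scope group_scope.

(* Each prime q of a Frobenius complement H divides |P| - 1 for every Sylow
   p-subgroup P of the kernel K: a Sylow q-subgroup of H normalizes some
   Sylow p-subgroup of K (coprime action) and acts regularly on it. *)
Lemma Frobenius_complement_prime_action (gT : finGroupType) (G K H : {group gT}) q p :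
  [Frobenius G = K ><| H] -> prime q -> q %| #|H| -> prime p ->
  q %| p ^ logn p #|K| - 1.
Proof.
move=> frobG pr_q q_H pr_p.
have [Q sylQ] := Sylow_exists q H; have sQH := pHall_sub sylQ.
have q_Q : q %| #|Q|.
  rewrite (card_Hall sylQ) p_part -{1}(expn1 q) dvdn_exp2l //.
  by rewrite logn_gt0 mem_primes pr_q cardG_gt0.
have [defG _ _ _ _] := Frobenius_context frobG.
have [_ _ _ nKH _] := sdprod_context defG.
have coKQ : coprime #|K| #|Q| := coprimegS sQH (Frobenius_coprime frobG).
have [P sylP nPQ] :=
  sol_coprime_Sylow_exists p (pgroup_sol (pHall_pgroup sylQ)) (subset_trans sQH nKH) coKQ.
have regPQ := semiregularS (pHall_sub sylP) sQH (Frobenius_reg_ker frobG).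
have := regular_norm_dvd_pred nPQ regPQ.
by rewrite (card_Hall sylP) p_part subn1; apply: dvdn_trans.
Qed.

(* Frobenius' theorem provides the kernel K of a Frobenius group with
   complement H; the orders of H and K form a Frobenius splitting. *)
Lemma Frobenius_numbers_exist (gT : finGroupType) (G : {group gT}) :
  [Frobenius G] -> exists h k, frobenius_numbers #|G| h k.
Proof.
case/existsP=> H /vcharacter.Frobenius_kernel_exists[K frobG].
have [defG ntK ntH _ _] := Frobenius_context frobG.
exists #|H|, #|K|; split; rewrite ?cardG_gt1 //.
- by rewrite mulnC (sdprod_card defG).
- by rewrite coprime_sym (Frobenius_coprime frobG).
- by rewrite subn1; apply: Frobenius_dvd_ker1 frobG.
- by move=> q p; apply: Frobenius_complement_prime_action frobG.
Qed.

(* The Frobenius groups B' = A ><| H1 and G / A = (B' / A) ><| H2 give the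
   factors a = |A|, b = |H1| = |B' / A| and c = |H2|. *)
Lemma two_Frobenius_numbers_exist (gT : finGroupType) (G : {group gT}) :
  two_Frobenius G -> exists a b c, two_frobenius_numbers #|G| a b c.
Proof.
case=> A [B [nAG nBG sAB /existsP[H1 frobB] /existsP[H2 frobGA]]].
have [defB ntA ntH1 _ _] := Frobenius_context frobB.
have [defGA _ ntH2 _ _] := Frobenius_context frobGA.
have nAB : B \subset 'N(A) := subset_trans (normal_sub nBG) (normal_norm nAG).
have oBA : #|B / A| = #|H1|.
  apply/eqP; rewrite (card_quotient nAB) -(@eqn_pmul2l #|A|) ?cardG_gt0 //.
  by rewrite (Lagrange sAB) (sdprod_card defB).
have oG : #|G| = (#|A| * #|H1| * #|H2|)%N.
  rewrite -(Lagrange (normal_sub nAG)) -(card_quotient (normal_norm nAG)).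
  by rewrite -(sdprod_card defGA) oBA mulnA.
exists #|A|, #|H1|, #|H2|; split; rewrite ?cardG_gt1 ?oG //.
- exact: Frobenius_coprime frobB.
- by rewrite -oBA; apply: Frobenius_coprime frobGA.
- by rewrite -oBA subn1; apply: Frobenius_dvd_ker1 frobGA.
- by rewrite subn1; apply: Frobenius_dvd_ker1 frobB.
- by move=> q p; apply: Frobenius_complement_prime_action frobB.
- by move=> q p; rewrite -oBA; apply: Frobenius_complement_prime_action frobGA.
Qed.

End GroupNumbers.

(* A Frobenius complement order is a linked divisor: a prime outside it lies
   in the kernel with its full exponent. *)
Lemma frobenius_linked n h k : frobenius_numbers n h k -> linked_divisor n h.
Proof.
case=> hk _ _ _ _ act q p pr_q q_h pr_p _ p'h; apply/orP; right.
by rewrite -hk logn_Gauss ?prime_coprime //; apply: act.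
Qed.

(* In a 2-Frobenius splitting, b is a linked divisor: a prime of c is linked
   to b through the upper action, any other prime lies in a. *)
Lemma two_frobenius_linked n a b c : two_frobenius_numbers n a b c -> linked_divisor n b.
Proof.
case=> abc cab cbc _ _ _ _ _ act_b act_c q p pr_q q_b pr_p p_n p'b.
have cop_q m : coprime b m -> coprime q m by apply: coprime_dvdl.
have log_q : logn q n = logn q b.
  rewrite -abc mulnC logn_Gauss ?(cop_q c) // logn_Gauss // (cop_q a) //.
  by rewrite coprime_sym.
have [p_c|p'c] := boolP (p %| c); first by rewrite /linked log_q act_c.
have p_a : p %| a.
  by move: p_n; rewrite -abc !Euclid_dvdM // (negbTE p'b) (negbTE p'c) !orbF.
have log_p : logn p n = logn p a.
  by rewrite -abc -mulnA mulnC logn_Gauss // coprimeMr !prime_coprime ?p'b.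
by rewrite /linked log_p act_b ?orbT.
Qed.

Section Obstruction.
Variables (n r : nat).
Hypotheses (hub_r : hub n r) (obstruction : two_part_obstruction n).

(* No Frobenius splitting: the complement is neither the 2-part (residue
   obstruction, with trivial second factor) nor the 2'-part (too large to
   divide n_2 - 1). *)
Lemma no_frobenius_numbers h k : ~ frobenius_numbers n h k.
Proof.
move=> fr; case: (fr) => hk chk h_gt1 k_gt1 h_k _; case: obstruction => small_t res_t.
have [[eh ek]|[eh ek]] := linked_split hk chk h_gt1 k_gt1 (frobenius_linked fr) hub_r.
- subst h k; move/negP: res_t; apply.
  by rewrite (@cofactor_mod _ _ n`_2^' 1) ?muln1 ?dvd1n // ltnW.
- subst h k; have := dvdn_leq _ h_k; rewrite subn_gt0 => /(_ k_gt1).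
  by rewrite leqNgt ltn_subLR ?add1n ?small_t // ltnW.
Qed.

(* No 2-Frobenius splitting: b is neither the 2-part (residue obstruction)
   nor the 2'-part (then b | a - 1 with a <= n_2 < b). *)
Lemma no_two_frobenius_numbers a b c : ~ two_frobenius_numbers n a b c.
Proof.
move=> tf; case: (tf) => abc cab cbc a_gt1 b_gt1 c_gt1 c_b b_a _ _.
case: obstruction => small_t res_t.
have bac : b * (a * c) = n by rewrite -abc mulnA (mulnC b a).
have cop : coprime b (a * c) by rewrite coprimeMr coprime_sym cab cbc.
have ac_gt1 : 1 < a * c by rewrite (leq_trans a_gt1) // leq_pmulr // ltnW.
have [[eb eac]|[eb eac]] := linked_split bac cop b_gt1 ac_gt1 (two_frobenius_linked tf) hub_r.
- move/negP: res_t; apply; rewrite -eb -eac.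
  by rewrite (@cofactor_mod _ _ a c) // ltnW.
- have := dvdn_leq _ b_a; rewrite subn_gt0 => /(_ a_gt1) b_le.
  have : a <= n`_2 by rewrite -eac leq_pmulr // ltnW.
  by rewrite eb in b_le; lia.
Qed.

End Obstruction.

(* Residues commute with the embedding of nat into Z, where residues of
   large numbers can be evaluated. *)
Lemma natZ_mod (m d : nat) : Z.of_nat (m %% d) = (Z.of_nat m mod Z.of_nat d)%Z.
Proof.
rewrite -Nat2Z.inj_mod; congr Z.of_nat.
case: d => [|d]; first by rewrite modn0.
apply: (Nat.mod_unique _ _ (m %/ d.+1)); first by apply/ltP; rewrite ltn_mod.
by rewrite {1}(divn_eq m d.+1) mulnC.
Qed.

Lemma two_part_obstruction_of n e m (M : Z) :
  n = 2 ^ e * m -> 0 < e -> odd m -> 2 ^ e < m -> Z.of_nat m = M ->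
  ((2 ^ Z.of_nat e - 1) mod (M mod 2 ^ Z.of_nat e) =? 0)%Z = false ->
  two_part_obstruction n.
Proof.
move=> def_n e_gt0 odd_m small_t def_M res_t.
have t_gt1 : 1 < 2 ^ e by rewrite -(expn0 2) ltn_exp2l.
rewrite /two_part_obstruction.
have [<- <-] : 2 ^ e = n`_2 /\ m = n`_2^'.
  apply: two_part_split t_gt1 _ _ => //.
  - by rewrite coprimeXl // coprime2n.
  - by rewrite pnatX pnat_id.
  - by case: (m) odd_m.
have tZ : Z.of_nat (2 ^ e) = (2 ^ Z.of_nat e)%Z by lia.
have t1Z : Z.of_nat (2 ^ e - 1) = (2 ^ Z.of_nat e - 1)%Z by lia.
split=> //; apply/negP; rewrite /dvdn => /eqP/(congr1 Z.of_nat).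
by rewrite !natZ_mod def_M tZ t1Z; apply/Z.eqb_neq.
Qed.

Definition fval (fac : seq (nat * nat)) : nat := \prod_(x <- fac) x.1 ^ x.2.

Definition fexp (fac : seq (nat * nat)) (p : nat) : nat :=
  sumn [seq x.2 | x <- fac & x.1 == p].

Lemma fval_gt0 fac : all (fun x => prime x.1) fac -> 0 < fval fac.
Proof.
rewrite /fval; elim: fac => [|x s IH] /=; first by rewrite big_nil.
by case/andP=> pr_x /IH s_gt0; rewrite big_cons muln_gt0 expn_gt0 prime_gt0.
Qed.

Lemma logn_fval fac p : all (fun x => prime x.1) fac -> logn p (fval fac) = fexp fac p.
Proof.
elim: fac => [|x s IH] /=; first by rewrite /fval big_nil logn1.
case/andP=> pr_x pr_s.
rewrite /fval big_cons -/(fval s) lognM ?expn_gt0 ?fval_gt0 ?prime_gt0 //.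
rewrite lognX (logn_prime _ pr_x) IH // /fexp /= eq_sym.
by case: (x.1 == p); rewrite ?muln1 ?muln0.
Qed.

Lemma prime_dvd_fval fac p :
  all (fun x => prime x.1) fac -> prime p -> p %| fval fac -> p \in [seq x.1 | x <- fac].
Proof.
move=> + pr_p; elim: fac => [|x s IH] /=.
  by rewrite /fval big_nil dvdn1 => _ /eqP p1; rewrite p1 in pr_p.
case/andP=> pr_x /IH {}IH; rewrite /fval big_cons Euclid_dvdM // Euclid_dvdX //.
by rewrite dvdn_prime2 // inE => /orP[/andP[-> //]|/IH ->]; rewrite orbT.
Qed.

Fixpoint expmod (b e m : nat) : nat :=
  if e is e'.+1 then expmod b e' m * b %% m else 1 %% m.

Lemma expmodE b e m : expmod b e m = b ^ e %% m.
Proof. by elim: e => [|e IH] //=; rewrite IH modnMml expnSr. Qed.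

Lemma dvdn_pow_pred q p f : 0 < p -> (q %| p ^ f - 1) = (expmod p f q == 1 %% q).
Proof.
move=> p_gt0; rewrite expmodE eq_sym -eqn_mod_dvd //.
by rewrite expn_gt0 p_gt0.
Qed.

Definition linkedb (fac : seq (nat * nat)) (q p : nat) : bool :=
  (expmod q (fexp fac q) p == 1 %% p) || (expmod p (fexp fac p) q == 1 %% q).

Definition hubb (fac : seq (nat * nat)) (r : nat) : bool :=
  [&& prime r, 0 < fexp fac r &
      all (fun x => [|| ~~ odd x.1, x.1 == r | ~~ linkedb fac r x.1]) fac].

Lemma hubbP fac r : all (fun x => prime x.1) fac -> hubb fac r -> hub (fval fac) r.
Proof.
move=> pr_fac /and3P[pr_r e_r /allP hub_fac]; split=> //.
  by move: e_r; rewrite -logn_fval // logn_gt0 mem_primes => /and3P[].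
move=> p pr_p /(prime_dvd_fval pr_fac pr_p)/mapP[x x_fac def_p] odd_p p_r.
subst p; have := hub_fac x x_fac; rewrite odd_p (negbTE p_r) /=.
by rewrite /linkedb /linked !logn_fval // !dvdn_pow_pred ?prime_gt0.
Qed.


Definition Monster_factors : seq (nat * nat) :=
  [:: (2, 46); (3, 20); (5, 9); (7, 6); (11, 2); (13, 3); (17, 1); (19, 1);
      (23, 1); (29, 1); (31, 1); (41, 1); (47, 1); (59, 1); (71, 1)].

Definition BabyMonster_factors : seq (nat * nat) :=
  [:: (2, 41); (3, 13); (5, 6); (7, 2); (11, 1); (13, 1); (17, 1); (19, 1);
      (23, 1); (31, 1); (47, 1)].

(* 17 is a hub of |M| and of |B|: 17 - 1 = 2^4 is divisible by no odd prime,
   and 17 divides none of the numbers p^(e_p) - 1; the hypotheses of hubbP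
   are decided by evaluation. *)
Lemma Monster_hub : hub Monster_order 17.
Proof.
have -> : Monster_order = fval Monster_factors.
  by rewrite /Monster_order /fval !big_cons big_nil /=; lia.
by apply: hubbP.
Qed.

Lemma BabyMonster_hub : hub BabyMonster_order 17.
Proof.
have -> : BabyMonster_order = fval BabyMonster_factors.
  by rewrite /BabyMonster_order /fval !big_cons big_nil /=; lia.
by apply: hubbP.
Qed.

Lemma Monster_obstruction : two_part_obstruction Monster_order.
Proof.
pose m := 3^20 * 5^9 * 7^6 * 11^2 * 13^3 * 17 * 19 * 23 * 29 * 31 * 41 * 47 * 59 * 71.
apply: (@two_part_obstruction_of _ 46 m
  (3^20 * 5^9 * 7^6 * 11^2 * 13^3 * 17 * 19 * 23 * 29 * 31 * 41 * 47 * 59 * 71)%Z).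
- by rewrite /Monster_order /m; lia.
- by [].
- by rewrite /m; lia.
- by rewrite /m; lia.
- by rewrite /m; lia.
- by vm_compute.
Qed.

Lemma BabyMonster_obstruction : two_part_obstruction BabyMonster_order.
Proof.
pose m := 3^13 * 5^6 * 7^2 * 11 * 13 * 17 * 19 * 23 * 31 * 47.
apply: (@two_part_obstruction_of _ 41 m
  (3^13 * 5^6 * 7^2 * 11 * 13 * 17 * 19 * 23 * 31 * 47)%Z).
- by rewrite /BabyMonster_order /m; lia.
- by [].
- by rewrite /m; lia.
- by rewrite /m; lia.
- by rewrite /m; lia.
- by vm_compute.
Qed.

Local Open Scope group_scope.

Theorem lemma2p12 (gT : finGroupType) (G : {group gT}) :
  (#|G| = Monster_order \/ #|G| = BabyMonster_order) ->
  ~ [Frobenius G] /\ ~ two_Frobenius G.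
Proof.
move=> oG; have [hub17 obstruction] : hub #|G| 17 /\ two_part_obstruction #|G|.
  case: oG => ->; split.
  - exact: Monster_hub.
  - exact: Monster_obstruction.
  - exact: BabyMonster_hub.
  - exact: BabyMonster_obstruction.
split.
- case/Frobenius_numbers_exist=> h [k].
  exact: no_frobenius_numbers hub17 obstruction h k.
- case/two_Frobenius_numbers_exist=> a [b [c]].
  exact: no_two_frobenius_numbers hub17 obstruction a b c.
Qed.
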